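(* Let $n\ge2$ and $\omega\in\{0,1\}^n$ with $\omega_1=0$ and $\omega_n=1$. For $0\le k\le n$ let $S_k=\sum_{i=1}^k(1-2\omega_i)$ (so $S_0=0$). Then the stabilization time $T(\omega)$ of $\omega$ satisfies $$T(\omega)=\frac n2+\max_{1\le k\le n}S_k-\frac{S_n}{2}-1.$$
   Context: One step of the evolution on $\{0,1\}^n$ replaces simultaneously every occurrence of the consecutive substring ''01'' by ''10'' (for every $i$ with $\omega_i=0,\omega_{i+1}=1$ these two bits are swapped). Iterating, one reaches a string of the form $1\cdots10\cdots0$, called stabilized. The stabilization time $T(\omega)$ is the number of steps needed to reach a stabilized string from $\omega$ ($0$ if $\omega$ is already stabilized). *)

(* Binary strings omega in {0,1}^n are represented as
   w : seq bool with size w = n; omega_i (1-based) is nth false w (i-1),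
   true = 1, false = 0. *)
From HB Require Import structures.
From mathcomp Require Import all_boot all_order all_algebra.
Set Implicit Arguments. Unset Strict Implicit. Unset Printing Implicit Defensive.
Import Order.TTheory GRing.Theory Num.Theory.

(* One step of the evolution: every occurrence of "01" is replaced by "10",
   simultaneously (occurrences of "01" never overlap). *)
Fixpoint step (w : seq bool) : seq bool :=
  match w with
  | false :: true :: s => true :: false :: step s
  | b :: s => b :: step s
  | [::] => [::]
  end.

Definition stabilized (w : seq bool) : Prop :=
  exists a b : nat, w = nseq a true ++ nseq b false.

Definition is_stab_time (w : seq bool) (t : nat) : Prop :=
  stabilized (iter t step w) /\ (forall k, k < t -> ~ stabilized (iter k step w)).

Definition S (w : seq bool) (k : nat) : int :=
  (\sum_(i < k) (1 - 2 * (nth false w i : nat)%:Z))%R.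

Definition maxS (w : seq bool) (n : nat) : int :=
  \big[Num.max/S w 1]_(1 <= k < n.+1) S w k.

From HB Require Import structures.
From mathcomp Require Import all_boot all_order all_algebra.
From mathcomp Require Import zify lra.
Import Order.TTheory GRing.Theory Num.Theory.

(* A string u of length n is encoded by its height function
     ones u k = number of 1s among the first k letters   (0 <= k <= n),
   which satisfies S_k = k - 2 ones u k.  One step of the evolution acts on
   heights by the local min-plus rule
     ones (step u) k = min (ones u (k+1)) (ones u (k-1) + 1)      (0 < k),
   the boundary values ones u 0 = 0 and ones u n = a (the number of 1s) are
   preserved, and u is stabilized iff ones u a = a.

   Section HeightFunction studies this recursion for an arbitrary family
   h t k with fixed boundary values and proves two bounds:
   - height_growth: if k <= m + 2 h 0 k for all k, then h t k grows at
     speed 1/2 until it saturates at min k a;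
   - height_cone: the light-cone bound 2 h t k <= k - j + t + 2 h 0 j.
   Taking m = max_k S_k, attained at j, the first bound shows that the string
   is stabilized at time a + m - 1 and the second, at k = a, that it is not
   at time a + m - 2; as stabilized strings are fixed points, a + m - 1 is
   the stabilization time (stab_time_at_max). *)

Definition ones (u : seq bool) (k : nat) : nat := count id (take k u).

Arguments ones : simpl never.

Lemma ones0 u : ones u 0 = 0.
Proof. by rewrite /ones take0. Qed.

Lemma ones_cons (x : bool) s k : ones (x :: s) k.+1 = x + ones s k.
Proof. by rewrite /ones. Qed.

Lemma onesS u k : ones u k.+1 = ones u k + nth false u k.
Proof.
elim: u k => [|x s IH] [|k] //; first by rewrite ones_cons ones0 addn0.
by rewrite ones_cons IH addnA.
Qed.

Lemma ones_size u : ones u (size u) = count id u.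
Proof. by rewrite /ones take_size. Qed.

Lemma ones_le u k : ones u k <= k.
Proof. by elim: k => [|k IH]; rewrite ?ones0 // onesS; case: nth; lia. Qed.

Lemma ones_lipschitz u j k : j <= k -> ones u j <= ones u k <= ones u j + (k - j).
Proof.
move=> jk; rewrite -(subnKC jk); elim: (k - j) => [|d IH]; first by rewrite addn0; lia.
by rewrite addnS onesS; case: nth; lia.
Qed.

Lemma step_true s : step (true :: s) = true :: step s.
Proof. by []. Qed.

Lemma step_false_true s : step [:: false, true & s] = [:: true, false & step s].
Proof. by []. Qed.

Lemma step_false_false s : step [:: false, false & s] = false :: step (false :: s).
Proof. by []. Qed.

Arguments step : simpl never.

(* A step moves a 1 across the boundary after position k exactly when the
   letters around that boundary read "01"; all other swaps stay inside or
   outside the prefix. *)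
Lemma ones_step u k :
  ones (step u) k = ones u k + (~~ nth false u k.-1 && nth false u k).
Proof.
have [m] := ubnP (size u); elim: m u k => // m IH [|[] s] k //= Hs.
- by rewrite !nth_nil /= addn0.
- rewrite step_true; case: k => [|k] //; rewrite !ones_cons IH; last by lia.
  by case: k => [|k] /=; [case: (nth false s 0); rewrite ones0 | rewrite addnA].
- case: s Hs => [|[] s] /= Hs.
  + by rewrite /step /ones; case: k => [|[|k]] /=; rewrite ?nth_nil.
  + rewrite step_false_true; case: k => [|[|k]] //.
    rewrite !ones_cons IH /=; last by lia.
    by case: k => [|k] /=; [case: (nth false s 0)|]; lia.
  + rewrite step_false_false; case: k => [|k] //.
    by rewrite !ones_cons IH /=; [case: k => [|k] /=; lia | lia].
Qed.

Lemma ones_step_min u k :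
  0 < k -> ones (step u) k = minn (ones u k.+1) (ones u k.-1).+1.
Proof.
case: k => // k _; rewrite ones_step /= !onesS.
by case: (nth false u k); case: (nth false u k.+1); lia.
Qed.

Lemma size_step u : size (step u) = size u.
Proof.
have [m] := ubnP (size u); elim: m u => // m IH [|[] s] //= Hs.
- by rewrite IH.
- case: s Hs => [|[] s] //= Hs.
  + by rewrite IH //; lia.
  + by rewrite IH.
Qed.

Lemma count_step u : count id (step u) = count id u.
Proof.
by rewrite -ones_size size_step ones_step ones_size (nth_default _ (leqnn _)) andbF addn0.
Qed.

(* Stabilized strings contain no "01", hence are fixed points of step. *)
Lemma step_stabilized v : stabilized v -> step v = v.
Proof.
case=> a [b ->]; elim: a => [|a IH]; last by rewrite /= step_true IH.
by elim: b => [|[|b] IH] //; rewrite /= step_false_false IH.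
Qed.

Lemma stabilizedP v : stabilized v <-> ones v (count id v) = count id v.
Proof.
split.
  case=> a [b ->]; rewrite count_cat !count_nseq /= mul1n mul0n addn0.
  by rewrite /ones take_size_cat ?size_nseq // count_nseq mul1n.
set a := count id v; rewrite /ones => Hv; exists a, (size v - a).
have a_le : a <= size v := count_size id v.
have take_ones : take a v = nseq a true.
  rewrite -[in RHS](size_takel a_le); apply/all_pred1P.
  by rewrite all_count size_takel // -[X in _ == X]Hv; apply/eqP/eq_count; case.
have drop_zeros : drop a v = nseq (size v - a) false.
  rewrite -size_drop; apply/all_pred1P.
  have drop0 : count id (drop a v) = 0.
    by move: (count_cat id (take a v) (drop a v)); rewrite cat_take_drop -/a; lia.
  by rewrite all_count -(count_predC id) drop0; apply/eqP/eq_count; case.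
by rewrite -[LHS](cat_take_drop a v) take_ones drop_zeros.
Qed.

Section HeightFunction.
Context {n a : nat} {h : nat -> nat -> nat}.
Hypothesis h_left : forall t, h t 0 = 0.
Hypothesis h_right : forall t, h t n = a.
Hypothesis h_step :
  forall t k, 0 < k < n -> h t.+1 k = minn (h t k.+1) (h t k.-1).+1.

Lemma height_growth {m : nat} :
  (forall k, k <= n -> k <= m + 2 * h 0 k) ->
  forall t k, k <= n -> minn k a <= h t k \/ k + t <= m + 2 * h t k.
Proof.
move=> h0_ge; elim=> [|t IH] k kn; first by right; rewrite addn0 h0_ge.
have [->|k_pos] := posnP k; first by left; rewrite min0n.
have [k_lt|k_ge] := ltnP k n; last first.
  have -> : k = n by lia.
  by left; rewrite h_right geq_minr.
by rewrite h_step ?k_pos //; move: (IH k.-1) (IH k.+1); lia.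
Qed.

Hypothesis h0_lipschitz : forall j, j <= n -> a <= h 0 j + (n - j).

Lemma height_cone t k j :
  k <= n -> j <= n -> j <= k + t -> k <= j + t -> ~~ odd (j + k + t) ->
  2 * h t k + j <= k + t + 2 * h 0 j.
Proof.
elim: t k => [|t IH] k kn jn jk kj even_jkt.
  by rewrite (_ : j = k); lia.
have [k0|k_pos] := posnP k; first by rewrite k0 h_left; lia.
have [k_lt|k_ge] := ltnP k n; last first.
  have -> : k = n by lia.
  by rewrite h_right; have := h0_lipschitz _ jn; lia.
by rewrite h_step ?k_pos //; move: (IH k.-1) (IH k.+1); lia.
Qed.

End HeightFunction.

Lemma size_iter t u : size (iter t step u) = size u.
Proof. by elim: t => //= t IH; rewrite size_step. Qed.

Lemma count_iter t u : count id (iter t step u) = count id u.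
Proof. by elim: t => //= t IH; rewrite count_step. Qed.

Lemma iter_stabilized d v : stabilized v -> iter d step v = v.
Proof. by move=> st; elim: d => //= d ->; apply: step_stabilized. Qed.

(* Since stabilized strings are fixed points, it suffices to check that the
   string is stabilized at time t+1 but not at time t. *)
Lemma is_stab_timeS u t :
  stabilized (iter t.+1 step u) -> ~ stabilized (iter t step u) ->
  is_stab_time u t.+1.
Proof.
move=> st_next not_st; split=> // k k_lt st_k; apply: not_st.
by rewrite -(subnK (k_lt : k <= t)) iterD iter_stabilized.
Qed.

Lemma stab_time_at_max u j :
  j <= size u -> ones u j < count id u -> 2 * ones u j < j ->
  (forall k, k <= size u -> k + 2 * ones u j <= j + 2 * ones u k) ->
  is_stab_time u (count id u + j - 2 * ones u j - 1).
Proof.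
set n := size u; set a := count id u; set c := ones u j => jn c_lt_a c_lt_j j_max.
pose h t k := ones (iter t step u) k.
have h_left t : h t 0 = 0 by exact: ones0.
have h_right t : h t n = a by rewrite /h /n -(size_iter t u) ones_size count_iter.
have h_step t k : 0 < k < n -> h t.+1 k = minn (h t k.+1) (h t k.-1).+1.
  by case/andP=> k_pos _; rewrite /h /= ones_step_min.
have h0_lipschitz k : k <= n -> a <= h 0 k + (n - k).
  by move=> kn; have := ones_lipschitz u k n kn; rewrite /h /n ones_size /=; lia.
have -> : a + j - 2 * c - 1 = (a + j - 2 * c - 2).+1 by lia.
apply: is_stab_timeS.
- apply/stabilizedP; rewrite count_iter -/a.
  have h0_ge k : k <= n -> k <= (j - 2 * c) + 2 * h 0 k.
    by move=> /j_max; rewrite /h /=; lia.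
  have := height_growth h_right h_step h0_ge (a + j - 2 * c - 2).+1 a (count_size id u).
  by have := ones_le (iter (a + j - 2 * c - 2).+1 step u) a; rewrite /h; lia.
- move/stabilizedP; rewrite count_iter -/a => st.
  have := height_cone h_left h_right h_step h0_lipschitz
    (a + j - 2 * c - 2) a j (count_size id u) jn.
  rewrite /h /= st; lia.
Qed.

Lemma S_succ w k : S w k.+1 = (S w k + 1 - 2 * (nth false w k : nat)%:Z)%R.
Proof. by rewrite /S big_ord_recr /= addrA. Qed.

Lemma S_ones w k : S w k = (k%:Z - 2 * (ones w k)%:Z)%R.
Proof.
elim: k => [|k IH]; first by rewrite /S big_ord0 ones0.
by rewrite S_succ IH onesS; case: (nth false w k); rewrite /= !PoszD; lia.
Qed.

Lemma maxS_spec w n : 0 < n ->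
  (forall k, 0 < k <= n -> (S w k <= maxS w n)%R) /\
  exists2 j, 0 < j <= n & maxS w n = S w j.
Proof.
move=> n_pos; split=> [k k_range|].
  by apply: le_bigmax_seq => //; rewrite mem_index_iota.
rewrite /maxS big_seq_cond.
apply: (big_ind (fun y => exists2 j, 0 < j <= n & y = S w j)).
- by exists 1; rewrite ?n_pos.
- move=> y z [j1 j1_range ->] [j2 j2_range ->].
  by rewrite maxEle; case: ifP; [exists j2 | exists j1].
- by move=> i; rewrite mem_index_iota andbT => i_range; exists i.
Qed.

Theorem lemma1p2 (n : nat) (w : seq bool) :
  2 <= n -> size w = n -> nth false w 0 = false -> nth false w n.-1 = true ->
  exists t : nat, is_stab_time w t /\
    (t%:R = (n%:R / 2 + (maxS w n)%:~R - (S w n)%:~R / 2 - 1 : rat))%R.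
Proof.
move=> n_ge2 size_w w_first w_last.
have [S_le_max [j j_range max_j]] := maxS_spec w n (ltnW n_ge2).
have S_1 : S w 1 = 1%R by rewrite S_succ /S big_ord0 w_first.
have S_n : S w n = (S w n.-1 - 1)%R by rewrite -{1}(ltn_predK n_ge2) S_succ w_last; lia.
(* The maximum of S is not attained at n, since the last letter is a 1. *)
have j_lt_n : j < n.
  have := S_le_max n.-1 ltac:(lia); rewrite max_j.
  by case: (ltngtP j n) => // [|->]; [lia | rewrite S_n; lia].
set a := count id w; set c := ones w j.
have ones_n : ones w n = (ones w n.-1).+1.
  by rewrite -{1}(ltn_predK n_ge2) onesS w_last addn1.
have count_w : a = ones w n by rewrite -size_w ones_size.
have c_lt_a : c < a by have := ones_lipschitz w j n.-1 ltac:(lia); lia.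
have c_lt_j : 2 * c < j by have := S_le_max 1 ltac:(lia); rewrite S_1 max_j S_ones; lia.
have j_max k : k <= size w -> k + 2 * c <= j + 2 * ones w k.
  case: (posnP k) => [-> _|k_pos kn]; first by rewrite ones0; lia.
  by have := S_le_max k ltac:(lia); rewrite max_j !S_ones; lia.
exists (a + j - 2 * c - 1); split.
  by apply: stab_time_at_max => //; rewrite size_w ltnW.
(* The announced value is a + m - 1 with m = j - 2 c = maxS w n and
   S w n = n - 2 a. *)
have E : (a + j - 2 * c - 1) + 1 + 2 * c = a + j by lia.
have := congr1 (fun m : nat => m%:R : rat) E; rewrite max_j !S_ones -count_w.
rewrite -/c !intrB !intrM -!pmulrn !natrD -[(1 + 1 : rat)%R]/(2%:R)%R; lra.
Qed.
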